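(* In the setting of the context, let $x_0=x_0(0)$, $x_1=x_1(0)$ and $r_0=1/x_1$. Then, for $|x|\le 1$, $$\varphi_0(x)=\frac{\pi_{0,0}}{1-r_0x},$$ and for $j=1,2,\ldots$ and $|x|\le1$, $x\neq x_0$, $$\varphi_j(x)=\frac{a_j}{x-x_1}-\frac{q\varphi_{j-1}(x_0)(x+x_0)}{\bar q(x-x_1)}-\frac{q(px+\bar p)(\bar\mu_hx+\mu_h)}{p\bar q\bar\mu_h(x-x_1)}\cdot\frac{\varphi_{j-1}(x)-\varphi_{j-1}(x_0)}{x-x_0},$$ where $$a_j=\frac{[\bar p\bar q(\mu_l-\mu_h)-\bar pq\mu_l]\pi_{0,j}-\bar p\bar q\mu_l\pi_{0,j+1}+\bar pq(\mu_l-\mu_h)\pi_{0,j-1}-q(\bar p\bar\mu_h+p\mu_h)\varphi_{j-1}(x_0)}{p\bar q\bar\mu_h}.$$ Moreover $\pi_{0,0}=\frac{1-\rho}{\bar p\bar q}$.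
   Context: Fix $p,q,\mu_h,\mu_l\in(0,1)$ with $p+q+\mu_h+\mu_l=1$. For real $x$ write $\bar x=1-x$; let $\rho_h=p/\mu_h$, $\rho_l=q/\mu_l$, $\rho=\rho_h+\rho_l$, and assume $\rho<1$. Let $(Q_1(n),Q_2(n))_{n\ge0}$ be the discrete-time Markov chain on $\mathbb{Z}_{\ge0}^2$ (numbers of high- and low-priority customers in a discrete-time preemptive priority queue, early arrival system) whose one-step transition probabilities from $(i,j)$ to $(i+k,j+l)$ are as follows (unlisted transitions have probability $0$). If $i\ge1$, $j\ge0$: $(k,l)=(1,0)$: $p\bar q\bar\mu_h$; $(1,1)$: $pq\bar\mu_h$; $(0,1)$: $pq\mu_h+\bar pq\bar\mu_h$; $(-1,1)$: $\bar pq\mu_h$; $(-1,0)$: $\bar p\bar q\mu_h$; $(0,0)$: $\bar p\bar q\bar\mu_h+p\bar q\mu_h$. If $i=0$, $j\ge1$: $(1,0)$: $p\bar q\bar\mu_h$; $(1,1)$: $pq\bar\mu_h$; $(0,1)$: $pq\mu_h+\bar pq\bar\mu_l$; $(0,-1)$: $\bar p\bar q\mu_l$; $(0,0)$: $\bar p\bar q\bar\mu_l+p\bar q\mu_h+\bar pq\mu_l$. If $(i,j)=(0,0)$: $(1,0)$: $p\bar q\bar\mu_h$; $(1,1)$: $pq\bar\mu_h$; $(0,1)$: $pq\mu_h+\bar pq\bar\mu_l$; $(0,0)$: $\bar p\bar q+p\bar q\mu_h+\bar pq\mu_l$. Let $(\pi_{i,j})_{i,j\ge0}$ be its stationary distribution,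 and let $\varphi_j(x)=\sum_{i\ge0}\pi_{i,j}x^i$ for $j\ge0$. Define $\Delta(y)=(p\mu_h-\bar p\bar\mu_h)^2(qy+\bar q)^2-2(p\mu_h+\bar p\bar\mu_h)(qy+\bar q)+1$, and $x_0(y)=\frac{1-(p\mu_h+\bar p\bar\mu_h)(qy+\bar q)-\sqrt{\Delta(y)}}{2p\bar\mu_h(qy+\bar q)}$, $x_1(y)=\frac{1-(p\mu_h+\bar p\bar\mu_h)(qy+\bar q)+\sqrt{\Delta(y)}}{2p\bar\mu_h(qy+\bar q)}$, where the square root is the positive one for real $y$ with $\Delta(y)>0$ (in particular at $y=0$). *)

From Stdlib Require Import Reals ZArith.
From Coquelicot Require Import Coquelicot.

Open Scope R_scope.

Definition bar (x : R) : R := 1 - x.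

(* One-step transition probability from state (i,j) to state (k,l)
   of the discrete-time preemptive priority queue (early arrival system). *)
Definition trans (p q mh ml : R) (i j k l : nat) : R :=
  let dk := (Z.of_nat k - Z.of_nat i)%Z in
  let dl := (Z.of_nat l - Z.of_nat j)%Z in
  let is (a b : Z) := (Z.eqb dk a && Z.eqb dl b)%bool in
  if (1 <=? i)%nat then
    if is 1%Z 0%Z then p * bar q * bar mh
    else if is 1%Z 1%Z then p * q * bar mh
    else if is 0%Z 1%Z then p * q * mh + bar p * q * bar mh
    else if is (-1)%Z 1%Z then bar p * q * mh
    else if is (-1)%Z 0%Z then bar p * bar q * mh
    else if is 0%Z 0%Z then bar p * bar q * bar mh + p * bar q * mh
    else 0
  else if (1 <=? j)%nat then
    if is 1%Z 0%Z then p * bar q * bar mh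
    else if is 1%Z 1%Z then p * q * bar mh
    else if is 0%Z 1%Z then p * q * mh + bar p * q * bar ml
    else if is 0%Z (-1)%Z then bar p * bar q * ml
    else if is 0%Z 0%Z then bar p * bar q * bar ml + p * bar q * mh + bar p * q * ml
    else 0
  else
    if is 1%Z 0%Z then p * bar q * bar mh
    else if is 1%Z 1%Z then p * q * bar mh
    else if is 0%Z 1%Z then p * q * mh + bar p * q * bar ml
    else if is 0%Z 0%Z then bar p * bar q + p * bar q * mh + bar p * q * ml
    else 0.

(* pi is a stationary distribution of the chain: nonnegative, total mass 1,
   and global balance pi = pi P.  Since every transition changes each
   coordinate by at most one, the balance sum over all source states (i,j)
   reduces to the sources with i <= k+1 and j <= l+1 (the other terms of
   pi P at (k,l) are zero by definition of [trans]). *)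
Definition stationary (p q mh ml : R) (pi : nat -> nat -> R) : Prop :=
  (forall i j, 0 <= pi i j) /\
  is_lim_seq (fun N => sum_f_R0 (fun i => sum_f_R0 (fun j => pi i j) N) N) 1 /\
  (forall k l, pi k l =
     sum_f_R0 (fun i => sum_f_R0 (fun j => pi i j * trans p q mh ml i j k l) (l + 1))
              (k + 1)).

Definition phi (pi : nat -> nat -> R) (j : nat) (x : C) : C :=
  (Series (fun i => pi i j * Re (Cpow x i)), Series (fun i => pi i j * Im (Cpow x i))).

Definition Delta (p q mh : R) (y : R) : R :=
  (p * mh - bar p * bar mh) ^ 2 * (q * y + bar q) ^ 2
  - 2 * (p * mh + bar p * bar mh) * (q * y + bar q) + 1.

Definition x0f (p q mh : R) (y : R) : R :=
  (1 - (p * mh + bar p * bar mh) * (q * y + bar q) - sqrt (Delta p q mh y))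
  / (2 * p * bar mh * (q * y + bar q)).

Definition x1f (p q mh : R) (y : R) : R :=
  (1 - (p * mh + bar p * bar mh) * (q * y + bar q) + sqrt (Delta p q mh y))
  / (2 * p * bar mh * (q * y + bar q)).

(* The balance equations are linear, with coefficients depending only on whether i = 0 and
   whether j = 0.  Multiplying the interior equations of level j+1 by x^i and summing over i
   gives the functional equation
     K(x) phi_(j+1)(x) + L(x) phi_j(x) = w0 + w1 x,
   with kernel K(x) = p qbar mhbar (x - x0)(x - x1), 0 < x0 < 1 < x1, and
   L(x) = q (p x + pbar)(mhbar x + mh).  Evaluating it at the root x0, which lies in the unit
   disc, eliminates w0 (the kernel method); the boundary balance equations express w1 through
   pi_(0,.).  On level 0 the balance recurrence has characteristic roots 1/x0 > 1 and
   1/x1 < 1; boundedness of pi kills the first, so pi_(i,0) is geometric with ratio 1/x1.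
   Finally, the net flow across the cut between columns i and i+1 vanishes, so the marginal
   of Q1 is geometric and P(Q1 = 0) = 1 - p mhbar / (pbar mh); the functional equation at
   x = 1, summed over all levels, then determines pi_(0,0). *)

From Pilot Require Import Defs.
From Stdlib Require Import Reals Lra Lia ZArith.
From Coquelicot Require Import Coquelicot.

Open Scope R_scope.

Lemma is_series_iff_partial_sums (a : nat -> R) (l : R) :
  is_series a l <-> is_lim_seq (fun n => sum_f_R0 a n) l.
Proof.
  rewrite is_series_Reals, is_lim_seq_Reals. unfold infinite_sum, Un_cv. tauto.
Qed.

Lemma is_series_eq (a b : nat -> R) (la lb : R) :
  (forall n, a n = b n) -> la = lb -> is_series a la -> is_series b lb.
Proof. intros Hab <- Ha. exact (is_series_ext a b la Hab Ha). Qed.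

Lemma is_series_lincomb (al be : R) (a b : nat -> R) (la lb : R) :
  is_series a la -> is_series b lb ->
  is_series (fun n => al * a n + be * b n) (al * la + be * lb).
Proof.
  intros Ha Hb. apply (is_series_plus (fun n => al * a n) (fun n => be * b n)).
  - exact (is_series_scal_l al a la Ha).
  - exact (is_series_scal_l be b lb Hb).
Qed.

Lemma is_series_two_terms (a : nat -> R) :
  (forall k, (2 <= k)%nat -> a k = 0) -> is_series a (a 0%nat + a 1%nat).
Proof.
  intros Ha. apply is_series_iff_partial_sums.
  apply is_lim_seq_ext_loc with (fun _ => a 0%nat + a 1%nat); [|apply is_lim_seq_const].
  exists 1%nat. intro n. induction n as [|n IH]; intros Hn; [lia|].
  destruct n as [|n]; [reflexivity|].
  rewrite tech5, (Ha (S (S n))), <- IH by lia. ring.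
Qed.

Definition shift_right (c : nat -> R) (k : nat) : R :=
  match k with O => 0 | S k' => c k' end.

Lemma is_series_shift_right (a : nat -> R) (l : R) :
  is_series a l -> is_series (shift_right a) l.
Proof.
  intros Ha. apply is_series_decr_1. eapply is_series_eq; [| |exact Ha].
  - reflexivity.
  - simpl. unfold plus, opp; simpl. ring.
Qed.

Lemma nonneg_series_bounded (a : nat -> R) (M : R) :
  (forall n, 0 <= a n) -> (forall n, sum_f_R0 a n <= M) ->
  ex_series a /\ Series a <= M /\ (forall n, sum_f_R0 a n <= Series a).
Proof.
  intros Ha HM.
  assert (Hincr : Un_growing (fun n => sum_f_R0 a n)).
  { intro n. rewrite tech5. specialize (Ha (S n)). lra. }
  destruct (growing_cv _ Hincr) as [l Hl].
  { exists M. intros y [i ->]. apply HM. }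
  assert (Hs : is_series a l) by (apply is_series_iff_partial_sums, is_lim_seq_Reals, Hl).
  rewrite (is_series_unique a l Hs).
  split; [now exists l|].
  apply is_series_iff_partial_sums in Hs. split.
  - exact (is_lim_seq_le _ _ _ _ HM Hs (is_lim_seq_const M)).
  - exact (is_lim_seq_incr_compare _ _ Hs Hincr).
Qed.

Lemma is_lim_seq_lincomb (a b : R) (u v : nat -> R) (lu lv : R) :
  is_lim_seq u lu -> is_lim_seq v lv ->
  is_lim_seq (fun n => a * u n + b * v n) (a * lu + b * lv).
Proof.
  intros Hu Hv. apply is_lim_seq_plus'.
  - exact (is_lim_seq_mult' (fun _ => a) u a lu (is_lim_seq_const a) Hu).
  - exact (is_lim_seq_mult' (fun _ => b) v b lv (is_lim_seq_const b) Hv).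
Qed.

Lemma invariant_seq_lim (G : nat -> R) (l : R) :
  (forall n, G (S n) = G n) -> is_lim_seq G l -> forall n, G n = l.
Proof.
  intros Hinv Hl n.
  assert (Hconst : forall k, G k = G n).
  { assert (H0 : forall k, G k = G 0%nat) by (induction k; congruence).
    intro k. now rewrite (H0 k), (H0 n). }
  apply is_lim_seq_ext with (v := fun _ => G n) in Hl; [|exact Hconst].
  apply is_lim_seq_unique in Hl. rewrite Lim_seq_const in Hl. now injection Hl.
Qed.

Lemma geometric_bounded_zero (e : nat -> R) (r M : R) :
  1 < Rabs r -> (forall k, e (S k) = r * e k) -> (forall k, Rabs (e k) <= M) ->
  forall k, e k = 0.
Proof.
  intros Hr He HM.
  assert (Hpow : forall k, e k = r ^ k * e 0%nat)
    by (induction k; simpl; [ring|rewrite He, IHk; ring]).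
  assert (He0 : e 0%nat = 0).
  { destruct (Req_dec (e 0%nat) 0) as [|Hne]; [assumption|exfalso].
    assert (Habs : 0 < Rabs (e 0%nat)) by (apply Rabs_pos_lt, Hne).
    destruct (Pow_x_infinity r ltac:(lra) ((M + 1) / Rabs (e 0%nat))) as [N HN].
    specialize (HN N (le_n N)). specialize (HM N).
    rewrite Hpow, Rabs_mult in HM.
    apply Rge_le in HN. apply (Rmult_le_compat_r (Rabs (e 0%nat))) in HN; [|lra].
    unfold Rdiv in HN. rewrite Rmult_assoc, Rinv_l in HN; lra. }
  intro k. now rewrite Hpow, He0, Rmult_0_r.
Qed.

Lemma geometric_series_head (u : nat -> R) (r s : R) :
  Rabs r < 1 -> (forall k, u (S k) = r * u k) -> is_series u s -> u 0%nat = s * (1 - r).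
Proof.
  intros Hr Hu Hs.
  assert (Hgeo : is_series u (u 0%nat * / (1 - r))).
  { eapply is_series_eq; [| |exact (is_series_scal_l (u 0%nat) _ _ (is_series_geom r Hr))].
    - intro n. unfold scal; simpl; unfold mult; simpl.
      induction n; simpl; [ring|]. rewrite Hu, <- IHn. ring.
    - reflexivity. }
  apply is_series_unique in Hgeo. apply is_series_unique in Hs.
  rewrite Hs in Hgeo. rewrite Hgeo.
  apply Rabs_def2 in Hr. field. lra.
Qed.

Definition sum_rect (f : nat -> nat -> R) (n m : nat) : R :=
  sum_f_R0 (fun i => sum_f_R0 (fun j => f i j) m) n.

Lemma sum_rect_transpose (f : nat -> nat -> R) (n m : nat) :
  sum_rect (fun i j => f j i) n m = sum_rect f m n.
Proof.
  unfold sum_rect. induction m as [|m IH]; simpl; [reflexivity|].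
  rewrite <- IH, <- sum_plus. reflexivity.
Qed.

Lemma le_sum_f_R0_last (a : nat -> R) (n : nat) :
  (forall k, 0 <= a k) -> a n <= sum_f_R0 a n.
Proof. intros Ha. destruct n as [|n]; simpl; [lra|]. pose proof (cond_pos_sum a n Ha). lra. Qed.

Lemma Series_sum_f_R0 (g : nat -> nat -> R) (n : nat) : (forall k, ex_series (g k)) ->
  ex_series (fun i => sum_f_R0 (fun k => g k i) n) /\
  sum_f_R0 (fun k => Series (g k)) n = Series (fun i => sum_f_R0 (fun k => g k i) n).
Proof.
  intros Hg. induction n as [|n [IHex IHeq]]; simpl.
  - split; [exact (Hg 0%nat)|reflexivity].
  - split.
    + exact (ex_series_plus _ _ IHex (Hg (S n))).
    + rewrite IHeq, Series_plus; auto.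
Qed.

Section NonnegArray.

Variable f : nat -> nat -> R.
Hypothesis f_nonneg : forall i j, 0 <= f i j.

Lemma sum_rect_mono (n m n' m' : nat) :
  (n <= n')%nat -> (m <= m')%nat -> sum_rect f n m <= sum_rect f n' m'.
Proof.
  intros Hn Hm. unfold sum_rect.
  apply Rle_trans with (sum_f_R0 (fun i => sum_f_R0 (fun j => f i j) m') n).
  - apply sum_Rle. intros i _. induction Hm as [|m' _ IH]; [lra|].
    rewrite tech5. pose proof (f_nonneg i (S m')). lra.
  - induction Hn as [|n' _ IH]; [lra|]. rewrite tech5.
    pose proof (cond_pos_sum (fun j => f (S n') j) m' (f_nonneg _)). lra.
Qed.

Lemma le_sum_rect (i j : nat) : f i j <= sum_rect f i j.
Proof.
  unfold sum_rect.
  apply Rle_trans with (sum_f_R0 (fun j' => f i j') j);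
    [exact (le_sum_f_R0_last _ _ (f_nonneg i))|].
  apply (le_sum_f_R0_last (fun i' => sum_f_R0 (fun j' => f i' j') j)).
  intro; apply cond_pos_sum, f_nonneg.
Qed.

Variable s : R.
Hypothesis f_square_sums : is_lim_seq (fun N => sum_rect f N N) s.

Lemma sum_rect_le_lim (n m : nat) : sum_rect f n m <= s.
Proof.
  assert (Hsq : forall N, sum_rect f N N <= s).
  { apply (is_lim_seq_incr_compare _ _ f_square_sums).
    intro N. apply sum_rect_mono; lia. }
  eapply Rle_trans; [|apply (Hsq (Nat.max n m))]. apply sum_rect_mono; lia.
Qed.

Lemma double_series_rows :
  (forall j, ex_series (fun i => f i j)) /\ is_series (fun j => Series (fun i => f i j)) s.
Proof.
  assert (Hrow : forall j, ex_series (fun i => f i j)).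
  { intro j. apply (nonneg_series_bounded (fun i => f i j) s (fun i => f_nonneg i j)).
    intro n. eapply Rle_trans; [|apply (sum_rect_le_lim n j)]. unfold sum_rect.
    apply sum_Rle. intros i _. apply (le_sum_f_R0_last (fun j' => f i j')), f_nonneg. }
  split; [exact Hrow|].
  apply is_series_iff_partial_sums.
  apply is_lim_seq_le_le with (fun N => sum_rect f N N) (fun _ => s);
    [|exact f_square_sums|apply is_lim_seq_const].
  intro n. destruct (Series_sum_f_R0 (fun j i => f i j) n Hrow) as [_ Heq].
  simpl in Heq. rewrite Heq.
  destruct (nonneg_series_bounded (fun i => sum_f_R0 (fun j => f i j) n) s) as [_ [Hle Hge]].
  - intro i. apply cond_pos_sum. intro; apply f_nonneg.
  - intro m. apply sum_rect_le_lim.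
  - split; [apply Hge|exact Hle].
Qed.

End NonnegArray.

Definition gf (c : nat -> R) (x : C) : C :=
  (Series (fun i => c i * Re (Cpow x i)), Series (fun i => c i * Im (Cpow x i))).

Definition has_gf (c : nat -> R) (x L : C) : Prop :=
  is_series (fun i => c i * Re (Cpow x i)) (Re L) /\
  is_series (fun i => c i * Im (Cpow x i)) (Im L).

Lemma has_gf_unique (c : nat -> R) (x L1 L2 : C) : has_gf c x L1 -> has_gf c x L2 -> L1 = L2.
Proof.
  intros [Hre1 Him1] [Hre2 Him2].
  apply is_series_unique in Hre1, Him1, Hre2, Him2.
  destruct L1, L2; simpl in *. f_equal; congruence.
Qed.

Lemma has_gf_lincomb (al be : R) (c d : nat -> R) (x L1 L2 : C) :
  has_gf c x L1 -> has_gf d x L2 ->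
  has_gf (fun k => al * c k + be * d k) x (RtoC al * L1 + RtoC be * L2)%C.
Proof.
  intros [Hre1 Him1] [Hre2 Him2]. split.
  - eapply is_series_eq; [| |exact (is_series_lincomb al be _ _ _ _ Hre1 Hre2)].
    + intro n. cbv beta. ring.
    + destruct L1, L2; simpl. ring.
  - eapply is_series_eq; [| |exact (is_series_lincomb al be _ _ _ _ Him1 Him2)].
    + intro n. cbv beta. ring.
    + destruct L1, L2; simpl. ring.
Qed.

Lemma has_gf_shift_right (c : nat -> R) (x L : C) :
  has_gf c x L -> has_gf (shift_right c) x (x * L)%C.
Proof.
  destruct x as [a b]. intros [Hre Him]. split; apply is_series_decr_1.
  - eapply is_series_eq; [| |exact (is_series_lincomb a (- b) _ _ _ _ Hre Him)].
    + intro n. simpl. destruct (Cpow (a, b) n); simpl. ring.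
    + destruct L; simpl. unfold plus, opp; simpl. ring.
  - eapply is_series_eq; [| |exact (is_series_lincomb b a _ _ _ _ Hre Him)].
    + intro n. simpl. destruct (Cpow (a, b) n); simpl. ring.
    + destruct L; simpl. unfold plus, opp; simpl. ring.
Qed.

Lemma has_gf_two_terms (c : nat -> R) (x : C) : (forall k, (2 <= k)%nat -> c k = 0) ->
  has_gf c x (RtoC (c 0%nat) + RtoC (c 1%nat) * x)%C.
Proof.
  intros Hc. split.
  - eapply is_series_eq; [reflexivity| |apply is_series_two_terms].
    + destruct x; simpl. ring.
    + intros k Hk. rewrite Hc by exact Hk. ring.
  - eapply is_series_eq; [reflexivity| |apply is_series_two_terms].
    + destruct x; simpl. ring.
    + intros k Hk. rewrite Hc by exact Hk. ring.
Qed.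

Lemma has_gf_gf (c : nat -> R) (x : C) :
  (forall i, 0 <= c i) -> ex_series c -> Cmod x <= 1 -> has_gf c x (gf c x).
Proof.
  intros Hc Hsum Hx.
  assert (Hcomp : forall (proj : C -> R), (forall z, Rabs (proj z) <= Cmod z) ->
            ex_series (fun i => c i * proj (Cpow x i))).
  { intros proj Hproj.
    apply (@ex_series_le R_AbsRing R_CompleteNormedModule) with c; [|exact Hsum].
    intro n. change norm with Rabs; simpl.
    rewrite Rabs_mult, (Rabs_pos_eq (c n)) by apply Hc.
    assert (Hpow : Cmod (Cpow x n) <= 1).
    { rewrite Cmod_pow, <- (pow1 n). apply pow_incr. split; [apply Cmod_ge_0|exact Hx]. }
    pose proof (Hproj (Cpow x n)). pose proof (Hc n). pose proof (Rabs_pos (proj (Cpow x n))).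
    nra. }
  split; apply Series_correct, Hcomp.
  - exact re_le_Cmod.
  - intro z. destruct z as [a b]. unfold Cmod; simpl.
    rewrite <- sqrt_Rsqr_abs. apply sqrt_le_1_alt. unfold Rsqr. nra.
Qed.

Lemma gf_at_1 (c : nat -> R) : gf c 1 = RtoC (Series c).
Proof.
  unfold gf, RtoC. f_equal.
  - apply Series_ext. intro n. rewrite Cpow_1_l. simpl. ring.
  - rewrite (Series_ext _ (fun _ => 0)) by (intro n; rewrite Cpow_1_l; simpl; ring).
    apply is_series_unique. eapply is_series_eq; [reflexivity| |now apply is_series_two_terms].
    cbv beta. ring.
Qed.

Lemma kernel_method (A al be ga x0 x1 x U V V0 w0 w1 : C) :
  A <> 0%C -> (x - x0)%C <> 0%C -> (x - x1)%C <> 0%C ->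
  (A * (x - x0) * (x - x1) * U + (al * x * x + be * x + ga) * V = w0 + w1 * x)%C ->
  ((al * x0 * x0 + be * x0 + ga) * V0 = w0 + w1 * x0)%C ->
  U = ((w1 - (al * (x + x0) + be) * V0 - (al * x * x + be * x + ga) * ((V - V0) / (x - x0)))
       / (A * (x - x1)))%C.
Proof.
  intros HA Hx0 Hx1 Hx Hroot.
  assert (Hw0 : w0 = ((al * x0 * x0 + be * x0 + ga) * V0 - w1 * x0)%C) by (rewrite Hroot; ring).
  assert (HU : U = ((w0 + w1 * x - (al * x * x + be * x + ga) * V) / (A * (x - x0) * (x - x1)))%C).
  { rewrite <- Hx. field. auto. }
  rewrite HU, Hw0. field. auto.
Qed.

Ltac push_RtoC :=
  repeat first [rewrite RtoC_plus | rewrite RtoC_minus | rewrite RtoC_mult | rewrite RtoC_opp].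

Ltac simpl_trans :=
  unfold trans; cbv zeta;
  repeat match goal with |- context [Z.eqb ?d ?a] =>
    first [rewrite (proj2 (Z.eqb_eq d a)) by lia | rewrite (proj2 (Z.eqb_neq d a)) by lia] end;
  repeat match goal with |- context [Nat.leb ?a ?b] =>
    first [rewrite (proj2 (Nat.leb_le a b)) by lia | rewrite (proj2 (Nat.leb_nle a b)) by lia] end;
  cbv beta iota delta [andb];
  repeat match goal with |- context [if ?b then _ else _] => destruct b end.

Lemma sum_f_R0_last3 (F : nat -> R) (n : nat) : (forall i, (i < n)%nat -> F i = 0) ->
  sum_f_R0 F (n + 2) = F n + F (S n) + F (S (S n)).
Proof.
  intros HF. destruct n as [|n]; [simpl; ring|].
  replace (S n + 2)%nat with (S (S (S n))) by lia. simpl.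
  rewrite (sum_eq_R0 F n); [ring|]. intros; apply HF; lia.
Qed.

Section PriorityQueue.

Variables p q mh ml : R.
Hypotheses (Hp : 0 < p < 1) (Hq : 0 < q < 1) (Hmh : 0 < mh < 1) (Hml : 0 < ml < 1).
Variable pi : nat -> nat -> R.
Hypothesis Hstat : stationary p q mh ml pi.

Local Notation x0 := (x0f p q mh 0).
Local Notation x1 := (x1f p q mh 0).

Lemma balance_interior (k l : nat) :
  pi (S k) (S l) = p*bar q*bar mh * pi k (S l) + p*q*bar mh * pi k l
    + (p*q*mh + bar p*q*bar mh) * pi (S k) l + bar p*q*mh * pi (S (S k)) l
    + bar p*bar q*mh * pi (S (S k)) (S l)
    + (bar p*bar q*bar mh + p*bar q*mh) * pi (S k) (S l).
Proof.
  destruct Hstat as [_ [_ Hbal]]. rewrite Hbal at 1.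
  replace (S k + 1)%nat with (k + 2)%nat by lia.
  replace (S l + 1)%nat with (l + 2)%nat by lia.
  rewrite sum_f_R0_last3 by (intros i Hi; apply sum_eq_R0; intros j _; simpl_trans; ring).
  rewrite !sum_f_R0_last3 by (intros j Hj; simpl_trans; ring).
  simpl_trans; ring.
Qed.

Lemma balance_boundary (l : nat) :
  pi 0%nat (S l) = (p*q*mh + bar p*q*bar ml) * pi 0%nat l + bar p*q*mh * pi 1%nat l
    + (bar p*bar q*bar ml + p*bar q*mh + bar p*q*ml) * pi 0%nat (S l)
    + bar p*bar q*mh * pi 1%nat (S l) + bar p*bar q*ml * pi 0%nat (S (S l)).
Proof.
  destruct Hstat as [_ [_ Hbal]]. rewrite Hbal at 1.
  replace (S l + 1)%nat with (l + 2)%nat by lia.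
  change (sum_f_R0 ?F (0 + 1)) with (F 0%nat + F 1%nat); cbv beta.
  rewrite !sum_f_R0_last3 by (intros j Hj; simpl_trans; ring).
  simpl_trans; ring.
Qed.

Lemma balance_level0 (k : nat) :
  pi (S k) 0%nat = p*bar q*bar mh * pi k 0%nat
    + (bar p*bar q*bar mh + p*bar q*mh) * pi (S k) 0%nat + bar p*bar q*mh * pi (S (S k)) 0%nat.
Proof.
  destruct Hstat as [_ [_ Hbal]]. rewrite Hbal at 1.
  replace (S k + 1)%nat with (k + 2)%nat by lia.
  rewrite sum_f_R0_last3 by (intros i Hi; apply sum_eq_R0; intros j _; simpl_trans; ring).
  simpl. simpl_trans; ring.
Qed.

Lemma pi_nonneg (i j : nat) : 0 <= pi i j.
Proof. apply Hstat. Qed.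

Lemma pi_square_sums : is_lim_seq (fun N => sum_rect pi N N) 1.
Proof. apply Hstat. Qed.

Lemma series_over_i :
  (forall j, ex_series (fun i => pi i j)) /\ is_series (fun j => Series (fun i => pi i j)) 1.
Proof. exact (double_series_rows pi pi_nonneg 1 pi_square_sums). Qed.

Lemma series_over_j : (forall i, ex_series (pi i)) /\ is_series (fun i => Series (pi i)) 1.
Proof.
  apply (double_series_rows (fun j i => pi i j) (fun j i => pi_nonneg i j) 1).
  eapply is_lim_seq_ext; [|exact pi_square_sums]. intro N. now rewrite sum_rect_transpose.
Qed.

Lemma pi_le_1 (i j : nat) : pi i j <= 1.
Proof.
  eapply Rle_trans; [apply (le_sum_rect pi pi_nonneg)|].
  exact (sum_rect_le_lim pi pi_nonneg 1 pi_square_sums i j).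
Qed.

Lemma kernel_roots :
  0 < x0 < 1 /\ 1 < x1 /\
  1 - (bar p*bar q*bar mh + p*bar q*mh) = p*bar q*bar mh * (x0 + x1) /\
  bar p*bar q*mh = p*bar q*bar mh * (x0 * x1).
Proof.
  set (A := p*bar q*bar mh). set (B := bar p*bar q*mh).
  set (b := 1 - (bar p*bar q*bar mh + p*bar q*mh)).
  assert (HA : 0 < A) by (unfold A, bar; repeat apply Rmult_lt_0_compat; lra).
  assert (HB : 0 < B) by (unfold B, bar; repeat apply Rmult_lt_0_compat; lra).
  assert (Hb : b - A - B = q) by (unfold b, A, B, bar; ring).
  assert (HD : Defs.Delta p q mh 0 = b^2 - 4*A*B) by (unfold Defs.Delta, b, A, B, bar; ring).
  assert (HDpos : 0 < b^2 - 4*A*B).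
  { replace (b^2 - 4*A*B) with ((b - A - B)*(b + A + B) + (A - B)^2) by ring. rewrite Hb.
    pose proof (pow2_ge_0 (A - B)). assert (0 < q*(b + A + B)) by (apply Rmult_lt_0_compat; lra).
    lra. }
  set (s := sqrt (Defs.Delta p q mh 0)).
  assert (Hs2 : s * s = b^2 - 4*A*B) by (unfold s; rewrite sqrt_sqrt; lra).
  assert (Hs : 0 < s) by (unfold s; apply sqrt_lt_R0; lra).
  assert (Hx0 : x0 = (b - s) / (2*A)).
  { unfold x0f. fold s. unfold b, A, bar. f_equal; ring. }
  assert (Hx1 : x1 = (b + s) / (2*A)).
  { unfold x1f. fold s. unfold b, A, bar. f_equal; ring. }
  rewrite Hx0, Hx1. repeat split.
  - apply Rdiv_lt_0_compat; nra.
  - apply Rmult_lt_reg_r with (2*A); [lra|]. unfold Rdiv. rewrite Rmult_assoc, Rinv_l; nra.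
  - apply Rmult_lt_reg_r with (2*A); [lra|]. unfold Rdiv. rewrite Rmult_assoc, Rinv_l; nra.
  - field. lra.
  - replace ((b - s) / (2*A) * ((b + s) / (2*A))) with ((b*b - s*s) / (4*A*A)) by (field; lra).
    rewrite Hs2. field. lra.
Qed.

Lemma level0_geometric (k : nat) : pi (S k) 0%nat = / x1 * pi k 0%nat.
Proof.
  destruct kernel_roots as [Hx0 [Hx1 [Hsum Hprod]]].
  set (e := fun k => pi (S k) 0%nat - / x1 * pi k 0%nat).
  assert (Hstep : forall k, e (S k) = / x0 * e k).
  { intro n. unfold e.
    pose proof (balance_level0 n) as Hbal.
    apply Rmult_eq_reg_l with (bar p*bar q*mh);
      [|unfold bar; apply Rgt_not_eq; repeat apply Rmult_lt_0_compat; lra].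
    replace (bar p*bar q*mh * (pi (S (S n)) 0%nat - / x1 * pi (S n) 0%nat))
      with ((1 - (bar p*bar q*bar mh + p*bar q*mh)) * pi (S n) 0%nat - p*bar q*bar mh * pi n 0%nat
            - / x1 * (bar p*bar q*mh) * pi (S n) 0%nat) by lra.
    rewrite Hsum, Hprod. field. split; lra. }
  assert (Hbound : forall k, Rabs (e k) <= 2).
  { intro n. unfold e.
    pose proof (pi_nonneg (S n) 0). pose proof (pi_nonneg n 0).
    pose proof (pi_le_1 (S n) 0). pose proof (pi_le_1 n 0).
    assert (0 < / x1 < 1)
      by (split; [apply Rinv_0_lt_compat|rewrite <- Rinv_1; apply Rinv_lt_contravar]; lra).
    apply Rabs_le. split; nra. }
  assert (Hr : 1 < Rabs (/ x0)).
  { rewrite Rabs_pos_eq by (apply Rlt_le, Rinv_0_lt_compat; lra).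
    rewrite <- Rinv_1. apply Rinv_lt_contravar; lra. }
  pose proof (geometric_bounded_zero e (/ x0) 2 Hr Hstep Hbound k). unfold e in H. lra.
Qed.

Lemma phi_has_gf (j : nat) (x : C) : Cmod x <= 1 -> has_gf (fun i => pi i j) x (phi pi j x).
Proof.
  intros Hx. apply has_gf_gf; [intro; apply pi_nonneg|apply series_over_i|exact Hx].
Qed.

Lemma functional_equation (j : nat) (x : C) : Cmod x <= 1 ->
  ((RtoC (p*bar q*bar mh) * x * x - RtoC (1 - (bar p*bar q*bar mh + p*bar q*mh)) * x
      + RtoC (bar p*bar q*mh)) * phi pi (S j) x
   + (RtoC (p*q*bar mh) * x * x + RtoC (p*q*mh + bar p*q*bar mh) * x + RtoC (bar p*q*mh))
      * phi pi j x
   = RtoC (bar p*bar q*mh * pi 0%nat (S j) + bar p*q*mh * pi 0%nat j)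
     + RtoC (- (1 - (bar p*bar q*bar mh + p*bar q*mh)) * pi 0%nat (S j)
             + bar p*bar q*mh * pi 1%nat (S j) + (p*q*mh + bar p*q*bar mh) * pi 0%nat j
             + bar p*q*mh * pi 1%nat j) * x)%C.
Proof.
  intros Hx.
  set (A := p*bar q*bar mh). set (B := bar p*bar q*mh).
  set (b := 1 - (bar p*bar q*bar mh + p*bar q*mh)).
  set (A' := p*q*bar mh). set (C' := p*q*mh + bar p*q*bar mh). set (B' := bar p*q*mh).
  pose proof (phi_has_gf (S j) x Hx) as Hu. pose proof (phi_has_gf j x Hx) as Hv.
  pose proof (has_gf_shift_right _ _ _ Hu) as Hu1. pose proof (has_gf_shift_right _ _ _ Hu1) as Hu2.
  pose proof (has_gf_shift_right _ _ _ Hv) as Hv1. pose proof (has_gf_shift_right _ _ _ Hv1) as Hv2.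
  pose proof (has_gf_lincomb 1 B _ _ _ _ _ (has_gf_lincomb A (- b) _ _ _ _ _ Hu2 Hu1) Hu) as HK.
  pose proof (has_gf_lincomb 1 B' _ _ _ _ _ (has_gf_lincomb A' C' _ _ _ _ _ Hv2 Hv1) Hv) as HL.
  pose proof (has_gf_lincomb 1 1 _ _ _ _ _ HK HL) as Hsum.
  (* all coefficients of index >= 2 vanish by the interior balance equations *)
  eapply has_gf_unique in Hsum; [|apply has_gf_two_terms].
  - rewrite RtoC_opp in Hsum. cbv beta in Hsum. simpl shift_right in Hsum.
    etransitivity; [|etransitivity; [symmetry; exact Hsum|]].
    + ring.
    + f_equal; [f_equal; ring|f_equal; f_equal; ring].
  - intros [|[|k]] Hk; [lia|lia|]. simpl shift_right.
    pose proof (balance_interior k j). unfold A, B, b, A', C', B'. lra.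
Qed.

Lemma phi0_closed_form (x : C) : Cmod x <= 1 ->
  phi pi 0 x = (RtoC (pi 0%nat 0%nat) / (1 - RtoC (/ x1) * x))%C.
Proof.
  intros Hx.
  destruct kernel_roots as [_ [Hx1 _]].
  assert (Hr0 : 0 < / x1 < 1)
    by (split; [apply Rinv_0_lt_compat|rewrite <- Rinv_1; apply Rinv_lt_contravar]; lra).
  pose proof (phi_has_gf 0 x Hx) as Hu.
  pose proof (has_gf_lincomb 1 (- / x1) _ _ _ _ _ Hu (has_gf_shift_right _ _ _ Hu)) as Hdiff.
  eapply has_gf_unique in Hdiff; [|apply has_gf_two_terms].
  - cbv beta in Hdiff. simpl shift_right in Hdiff. rewrite level0_geometric in Hdiff.
    assert (Hden : (1 - RtoC (/ x1) * x)%C <> 0%C).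
    { intro H0. assert (Hmod : Cmod (RtoC (/ x1) * x) = 1).
      { replace (RtoC (/ x1) * x)%C with (1 - (1 - RtoC (/ x1) * x))%C by ring.
        rewrite H0. replace (1 - 0)%C with (RtoC 1) by ring. exact Cmod_1. }
      rewrite Cmod_mult, Cmod_R, Rabs_pos_eq in Hmod by lra.
      pose proof (Cmod_ge_0 x). nra. }
    assert (Hprod : (phi pi 0 x * (1 - RtoC (/ x1) * x) = RtoC (pi 0%nat 0%nat))%C).
    { transitivity (RtoC 1 * phi pi 0 x + RtoC (- / x1) * (x * phi pi 0 x))%C;
        [rewrite RtoC_opp; ring|].
      rewrite <- Hdiff.
      replace (1 * pi 0%nat 0%nat + - / x1 * 0) with (pi 0%nat 0%nat) by ring.
      replace (1 * (/ x1 * pi 0%nat 0%nat) + - / x1 * pi 0%nat 0%nat) with 0 by ring.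
      ring. }
    rewrite <- Hprod. field. exact Hden.
  - intros [|[|k]] Hk; [lia|lia|]. simpl shift_right. rewrite level0_geometric. ring.
Qed.

Lemma phi_succ_closed_form (j : nat) (x : C) : Cmod x <= 1 -> x <> RtoC x0 ->
  phi pi (S j) x =
   (((RtoC ((bar p * bar q * (ml - mh) - bar p * q * ml) * pi 0%nat (S j)
             - bar p * bar q * ml * pi 0%nat (S (S j))
             + bar p * q * (ml - mh) * pi 0%nat j)
      - RtoC (q * (bar p * bar mh + p * mh)) * phi pi j x0)
     / RtoC (p * bar q * bar mh)) / (x - x1)
    - RtoC q * phi pi j x0 * (x + x0) / (RtoC (bar q) * (x - x1))
    - RtoC q * (p * x + bar p) * (bar mh * x + mh) / (RtoC (p * bar q * bar mh) * (x - x1))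
      * ((phi pi j x - phi pi j x0) / (x - x0)))%C.
Proof.
  intros Hx Hne.
  destruct kernel_roots as [Hx0 [Hx1 [Hsum Hprod]]].
  assert (Hx0mod : Cmod (RtoC x0) <= 1) by (rewrite Cmod_R, Rabs_pos_eq; lra).
  pose proof (functional_equation j x Hx) as Fx.
  pose proof (functional_equation j x0 Hx0mod) as F0.
  pose proof (balance_boundary j) as Hbound.
  assert (HRtoC : forall r, r <> 0 -> RtoC r <> 0%C)
    by (intros r Hr Hc; apply Hr; exact (f_equal Re Hc)).
  assert (Hx1ne : (x - RtoC x1)%C <> 0%C).
  { intro Hc. assert (x = RtoC x1) by (rewrite <- (Cplus_0_l (RtoC x1)), <- Hc; ring).
    subst x. rewrite Cmod_R, Rabs_pos_eq in Hx; lra. }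
  erewrite (kernel_method (RtoC (p*bar q*bar mh)) (RtoC (p*q*bar mh))
    (RtoC (p*q*mh + bar p*q*bar mh)) (RtoC (bar p*q*mh)) (RtoC x0) (RtoC x1) x
    (phi pi (S j) x) (phi pi j x) (phi pi j x0)
    (RtoC (bar p*bar q*mh * pi 0%nat (S j) + bar p*q*mh * pi 0%nat j)));
    [| apply HRtoC; unfold bar; apply Rgt_not_eq; repeat apply Rmult_lt_0_compat; lra
     | apply Cminus_eq_contra, Hne | exact Hx1ne
     | rewrite <- Fx, Hsum, Hprod; push_RtoC; ring
     | rewrite <- F0, Hsum, Hprod; push_RtoC; ring ].
  assert (Hw1 : (bar p * bar q * (ml - mh) - bar p * q * ml) * pi 0%nat (S j)
             - bar p * bar q * ml * pi 0%nat (S (S j)) + bar p * q * (ml - mh) * pi 0%nat j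
           = - (1 - (bar p*bar q*bar mh + p*bar q*mh)) * pi 0%nat (S j)
             + bar p*bar q*mh * pi 1%nat (S j) + (p*q*mh + bar p*q*bar mh) * pi 0%nat j
             + bar p*q*mh * pi 1%nat j) by (unfold bar in *; lra).
  rewrite Hw1. unfold bar. push_RtoC.
  field. repeat split; [apply Cminus_eq_contra, Hne|exact Hx1ne| | |];
    intro Hc; apply (f_equal Re) in Hc; simpl in Hc; lra.
Qed.

Lemma high_marginal_balance (k : nat) :
  Series (pi (S k)) =
    (p*bar q*bar mh + p*q*bar mh) * Series (pi k)
    + (p*q*mh + bar p*q*bar mh + bar p*bar q*bar mh + p*bar q*mh) * Series (pi (S k))
    + (bar p*q*mh + bar p*bar q*mh) * Series (pi (S (S k))).
Proof.
  destruct series_over_j as [Hex _].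
  pose proof (fun i => Series_correct _ (Hex i)) as Hser.
  pose proof (is_series_lincomb 1 1 _ _ _ _
    (is_series_lincomb (p*bar q*bar mh) (p*q*bar mh) _ _ _ _
       (Hser k) (is_series_shift_right _ _ (Hser k)))
    (is_series_lincomb 1 1 _ _ _ _
       (is_series_lincomb (p*q*mh + bar p*q*bar mh) (bar p*q*mh) _ _ _ _
          (is_series_shift_right _ _ (Hser (S k))) (is_series_shift_right _ _ (Hser (S (S k)))))
       (is_series_lincomb (bar p*bar q*mh) (bar p*bar q*bar mh + p*bar q*mh) _ _ _ _
          (Hser (S (S k))) (Hser (S k))))) as Hcomb.
  eapply (is_series_eq _ (pi (S k))) in Hcomb; [|intros [|l]; simpl shift_right|reflexivity].
  - etransitivity; [exact (is_series_unique _ _ Hcomb)|ring].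
  - pose proof (balance_level0 k). lra.
  - pose proof (balance_interior k l). lra.
Qed.

Lemma high_marginal_cut (k : nat) : p * bar mh * Series (pi k) = bar p * mh * Series (pi (S k)).
Proof.
  destruct series_over_j as [_ Hsum].
  set (G := fun k => p * bar mh * Series (pi k) - bar p * mh * Series (pi (S k))).
  assert (Hlim : is_lim_seq (fun k => Series (pi k)) 0)
    by (apply ex_series_lim_0; exists 1; exact Hsum).
  (* [G k] is the net probability flow across the cut between columns [k] and [k+1] *)
  assert (HG : forall k, G k = 0).
  { apply invariant_seq_lim.
    - intro n. unfold G. pose proof (high_marginal_balance n). unfold bar in *. lra.
    - replace 0 with (p * bar mh * 0 + - (bar p * mh) * 0) by ring.
      eapply is_lim_seq_ext;
        [|exact (is_lim_seq_lincomb _ _ _ _ _ _ Hlim (proj1 (is_lim_seq_incr_1 _ _) Hlim))].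
      intro n. unfold G. ring. }
  specialize (HG k). unfold G in HG. lra.
Qed.

Lemma prob_high_empty : p < mh -> Series (pi 0%nat) = 1 - p * bar mh / (bar p * mh).
Proof.
  intros Hpmh.
  destruct series_over_j as [_ Hsum].
  assert (Hpos : 0 < bar p * mh) by (unfold bar; apply Rmult_lt_0_compat; lra).
  assert (Hratio : 0 <= p * bar mh / (bar p * mh) < 1).
  { split.
    - apply Rdiv_le_0_compat; [unfold bar; apply Rmult_le_pos|]; lra.
    - apply Rmult_lt_reg_r with (bar p * mh); [exact Hpos|].
      unfold Rdiv. rewrite Rmult_assoc, Rinv_l by lra. unfold bar. nra. }
  assert (Hstep : forall k, Series (pi (S k)) = p * bar mh / (bar p * mh) * Series (pi k)).
  { intro k. apply Rmult_eq_reg_l with (bar p * mh); [|lra].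
    rewrite <- high_marginal_cut. field. unfold bar. split; lra. }
  rewrite (geometric_series_head (fun k => Series (pi k)) (p * bar mh / (bar p * mh)) 1);
    [ring| |exact Hstep|exact Hsum].
  rewrite Rabs_pos_eq; lra.
Qed.

Lemma level_flux (j : nat) :
  q * Series (fun i => pi i j) + (p*q + bar p*q*bar ml - q) * pi 0%nat j
  = bar p*bar q*ml * pi 0%nat (S j).
Proof.
  destruct series_over_i as [_ Hsum]. destruct series_over_j as [Hex0 _].
  set (R := fun j => Series (fun i => pi i j)).
  set (F := fun j => q * R j + (p*q + bar p*q*bar ml - q) * pi 0%nat j
                     - bar p*bar q*ml * pi 0%nat (S j)).
  assert (Hstep : forall j, q * R j - q * R (S j) =
     bar p*bar q*mh * pi 0%nat (S j) + bar p*q*mh * pi 0%nat j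
     - (1 - (bar p*bar q*bar mh + p*bar q*mh)) * pi 0%nat (S j)
     + bar p*bar q*mh * pi 1%nat (S j) + (p*q*mh + bar p*q*bar mh) * pi 0%nat j
     + bar p*q*mh * pi 1%nat j).
  { intro n. assert (H1 : Cmod (RtoC 1) <= 1) by (rewrite Cmod_R, Rabs_R1; lra).
    pose proof (f_equal Re (functional_equation n (RtoC 1) H1)) as Hre.
    change (phi pi ?m (RtoC 1)) with (gf (fun i => pi i m) 1) in Hre.
    rewrite !gf_at_1 in Hre. simpl in Hre. fold (R n) (R (S n)) in Hre.
    unfold bar in *. lra. }
  assert (HR : is_lim_seq R 0) by (apply ex_series_lim_0; exists 1; exact Hsum).
  assert (Hrow0 : is_lim_seq (fun j => pi 0%nat j) 0) by apply ex_series_lim_0, Hex0.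
  assert (HF : forall j, F j = 0).
  { apply invariant_seq_lim.
    - intro n. unfold F. pose proof (Hstep n). pose proof (balance_boundary n).
      unfold bar in *. lra.
    - replace 0 with (1 * (q * 0 + (p*q + bar p*q*bar ml - q) * 0) + - (bar p*bar q*ml) * 0)
        by ring.
      eapply is_lim_seq_ext; [|apply is_lim_seq_lincomb;
        [exact (is_lim_seq_lincomb _ _ _ _ _ _ HR Hrow0)
        |exact (proj1 (is_lim_seq_incr_1 _ _) Hrow0)]].
      intro n. unfold F. ring. }
  specialize (HF j). unfold F, R in HF. lra.
Qed.

Lemma pi00_value :
  p / mh + q / ml < 1 -> pi 0%nat 0%nat = (1 - (p / mh + q / ml)) / (bar p * bar q).
Proof.
  intros Hrho.
  assert (Hpmh : p < mh).
  { assert (0 < q / ml) by (apply Rdiv_lt_0_compat; lra).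
    apply Rmult_lt_reg_r with (/ mh); [apply Rinv_0_lt_compat; lra|].
    rewrite Rinv_r by lra. fold (p / mh). lra. }
  destruct series_over_i as [_ Hlevels]. destruct series_over_j as [Hex0 _].
  pose proof (Series_correct _ (Hex0 0%nat)) as Hrow0.
  assert (Hflux : is_series (fun j => bar p*bar q*ml * pi 0%nat (S j))
                    (q * 1 + (p*q + bar p*q*bar ml - q) * Series (pi 0%nat))).
  { eapply is_series_eq; [exact level_flux|reflexivity|].
    exact (is_series_lincomb _ _ _ _ _ _ Hlevels Hrow0). }
  assert (Hshift : is_series (fun j => bar p*bar q*ml * pi 0%nat (S j))
                     (bar p*bar q*ml * (Series (pi 0%nat) - pi 0%nat 0%nat))).
  { apply (is_series_scal_l (bar p*bar q*ml) (fun j => pi 0%nat (S j))), is_series_incr_1.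
    eapply is_series_eq; [reflexivity| |exact Hrow0]. unfold plus; simpl. ring. }
  apply is_series_unique in Hflux. apply is_series_unique in Hshift.
  rewrite Hflux in Hshift. rewrite prob_high_empty in Hshift by exact Hpmh.
  assert (Hc : 0 < bar p*bar q*ml) by (unfold bar; repeat apply Rmult_lt_0_compat; lra).
  apply Rmult_eq_reg_l with (bar p*bar q*ml); [|lra].
  replace (bar p*bar q*ml * pi 0%nat 0%nat) with
    (bar p*bar q*ml * (1 - p * bar mh / (bar p * mh))
     - (q * 1 + (p*q + bar p*q*bar ml - q) * (1 - p * bar mh / (bar p * mh)))) by lra.
  unfold bar. field. repeat split; lra.
Qed.

End PriorityQueue.

Theorem lemma3p2 (p q mh ml : R) (pi : nat -> nat -> R) :
  0 < p < 1 -> 0 < q < 1 -> 0 < mh < 1 -> 0 < ml < 1 ->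
  p + q + mh + ml = 1 ->
  p / mh + q / ml < 1 ->
  stationary p q mh ml pi ->
  let x0 := x0f p q mh 0 in
  let x1 := x1f p q mh 0 in
  let r0 := / x1 in
  let rho := p / mh + q / ml in
  let a (j : nat) : C :=
    ((RtoC ((bar p * bar q * (ml - mh) - bar p * q * ml) * pi 0%nat j
             - bar p * bar q * ml * pi 0%nat (S j)
             + bar p * q * (ml - mh) * pi 0%nat (j - 1)%nat)
      - RtoC (q * (bar p * bar mh + p * mh)) * phi pi (j - 1)%nat x0)
     / RtoC (p * bar q * bar mh))%C in
  (forall x : C, Cmod x <= 1 ->
     phi pi 0 x = (pi 0%nat 0%nat : C) / (1 - r0 * x))%C /\
  (forall (j : nat) (x : C), (1 <= j)%nat -> Cmod x <= 1 -> x <> x0 ->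
     phi pi j x =
       a j / (x - x1)
       - (q : C) * phi pi (j - 1)%nat x0 * (x + x0) / ((bar q : C) * (x - x1))
       - (q : C) * (p * x + bar p) * (bar mh * x + mh)
           / ((p * bar q * bar mh)%R * (x - x1))
         * ((phi pi (j - 1)%nat x - phi pi (j - 1)%nat x0) / (x - x0)))%C /\
  pi 0%nat 0%nat = (1 - rho) / (bar p * bar q).
Proof.
  intros Hp Hq Hmh Hml _ Hrho Hstat x0 x1 r0 rho a.
  split; [|split].
  - intros x Hx. now apply phi0_closed_form with ml.
  - intros [|j] x Hj Hx Hne; [lia|].
    unfold a. replace (S j - 1)%nat with j by lia.
    now apply phi_succ_closed_form.
  - now apply pi00_value.
Qed.
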